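(* The intersection graph of $n$ axis-aligned rectangles in $\mathbb{R}^2$ admits a $3$-hop spanner of size $O(n\log n)$.
   Context: Rectangles are closed axis-aligned rectangles (including their interiors). The intersection graph has the rectangles as vertices, with an edge iff the two rectangles intersect. For a graph $G$ and integer $t\ge1$, a $t$-hop spanner is a subgraph $\widehat{G}$ of $G$ on the same vertex set such that for every edge $uv\in E(G)$ there is a $u$–$v$ path in $\widehat{G}$ with at most $t$ edges; its size is its number of edges. *)

From Stdlib Require Import Reals.
From mathcomp Require Import all_boot.

Set Implicit Arguments.
Unset Strict Implicit.
Unset Printing Implicit Defensive.

Record rect := Rect { xlo : R; xhi : R; ylo : R; yhi : R }.

Definition is_rect (r : rect) : Prop :=
  Rlt (xlo r) (xhi r) /\ Rlt (ylo r) (yhi r).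

Definition in_rect (r : rect) (p : R * R) : Prop :=
  (Rle (xlo r) (fst p) /\ Rle (fst p) (xhi r)) /\
  (Rle (ylo r) (snd p) /\ Rle (snd p) (yhi r)).

Definition rects_intersect (r s : rect) : Prop :=
  exists p : R * R, in_rect r p /\ in_rect s p.

Definition ig_edge (n : nat) (rs : 'I_n -> rect) (i j : 'I_n) : Prop :=
  i <> j /\ rects_intersect (rs i) (rs j).

(* A subgraph is given by its edge set H, each undirected edge {i,j}
   stored once as the ordered pair (i, j) with i < j; hence #|H| is its
   number of edges. *)
Definition hadj (n : nat) (H : {set 'I_n * 'I_n}) : rel 'I_n :=
  fun i j => ((i, j) \in H) || ((j, i) \in H).

Definition hop_spanner (n : nat) (E : 'I_n -> 'I_n -> Prop)
    (H : {set 'I_n * 'I_n}) (t : nat) : Prop :=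
  (forall i j : 'I_n, (i, j) \in H -> (i < j)%N /\ E i j) /\
  (forall i j : 'I_n, E i j ->
     exists p : seq 'I_n,
       (size p <= t)%N /\ path (hadj H) i p /\ last i p = j).

From Stdlib Require Import Reals Lra Lia ClassicalEpsilon.
From mathcomp Require Import all_boot zify.

(* Divide and conquer along the x-axis.  Take the rectangles meeting a
   vertical slab (a, b) and let K be the number of their x-endpoints inside
   it.  A rectangle spanning the slab meets a rectangle of the slab iff their
   y-intervals meet, and so do two rectangles crossing a common vertical line.
   For such families, routing every pair through a sparse cover of the union of
   the y-intervals (every interval meets at most 3 cover members) yields 3-hop
   paths with linearly many edges.  Cutting the slab at the median inner
   endpoint m, the pairs left over, neither involving a spanning rectangle nor
   both crossing x = m, lie on one side of m, where we recurse with at most K/2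
   inner endpoints.  Non-spanning rectangles have an endpoint inside the slab,
   so the recursion uses 12 (N + 2 K (log K + 1)) edges for N rectangles, which
   is O(n log n) for a slab containing all n rectangles. *)

Set Implicit Arguments.
Unset Strict Implicit.
Unset Printing Implicit Defensive.

Definition asbool (P : Prop) : bool := if excluded_middle_informative P then true else false.

Lemma asboolP (P : Prop) : reflect P (asbool P).
Proof. by rewrite /asbool; case: excluded_middle_informative => h; constructor. Qed.

(* A minimiser is an [x] with the fewest points strictly below it. *)
Lemma ex_Rargmin (T : finType) (A : {pred T}) (f : T -> R) (x0 : T) :
  x0 \in A -> exists2 x, x \in A & forall y, y \in A -> Rle (f x) (f y).
Proof.
move=> Ax0; pose below x := [set y in A | asbool (Rlt (f y) (f x))].
case: (arg_minnP (fun x => #|below x|) Ax0) => x Ax x_min.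
exists x => // y Ay; case: (Rle_lt_dec (f x) (f y)) => // fy_fx.
suff: #|below y| < #|below x| by rewrite ltnNge x_min.
apply/proper_card/properP; split.
  by apply/subsetP => z; rewrite !inE => /andP[-> /asboolP ?]; apply/asboolP; lra.
by exists y; rewrite !inE Ay /=; [apply/asboolP | apply/negP => /asboolP; lra].
Qed.

Lemma ex_Rargmax (T : finType) (A : {pred T}) (f : T -> R) (x0 : T) :
  x0 \in A -> exists2 x, x \in A & forall y, y \in A -> Rle (f y) (f x).
Proof.
move=> /(ex_Rargmin (fun x => Ropp (f x)))[x Ax x_min].
by exists x => // y /x_min; lra.
Qed.

Lemma card_bigcup_le (I T : finType) (A : {pred I}) (F : I -> {set T}) k :
  (forall i, i \in A -> #|F i| <= k) -> #|\bigcup_(i in A) F i| <= k * #|A|.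
Proof.
move=> cardF; rewrite mulnC -sum_nat_const.
elim/big_ind2: _ => [|m X p Y leX leY|i /cardF //]; first by rewrite cards0.
by rewrite (leq_trans (leq_card_setU X Y)) ?leq_add.
Qed.

(* [m] minimises [f] among the points having at least half of [E] at or below them. *)
Lemma ex_median (T : finType) (E : {set T}) (f : T -> R) : E != set0 ->
  exists2 m, m \in E &
    2 * #|[set e in E | asbool (Rlt (f e) (f m))]| <= #|E| /\
    2 * #|[set e in E | asbool (Rlt (f m) (f e))]| <= #|E|.
Proof.
case/set0Pn => x xE.
pose below y := [set e in E | asbool (Rle (f e) (f y))].
pose upper := [pred y | (y \in E) && (#|E| <= 2 * #|below y|)].
have [top topE top_max] := ex_Rargmax f xE.
have upper_top : upper top.
  rewrite inE topE (_ : below top = E); first lia.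
  by apply/setP => e; rewrite inE andb_idr // => /top_max /asboolP.
have [m /andP[mE m_upper] m_min] := ex_Rargmin f upper_top.
exists m => //; split.
- rewrite leqNgt; apply/negP => lower_big.
  set B := [set e in E | _] in lower_big.
  have [b bB] : exists b, b \in B by apply/set0Pn; rewrite -card_gt0; lia.
  have [j jB j_max] := ex_Rargmax f bB.
  move: (jB); rewrite inE => /andP[jE /asboolP fj].
  suff /m_min : upper j by lra.
  rewrite inE jE; apply: leq_trans (ltnW lower_big) _.
  rewrite leq_mul2l subset_leq_card //; apply/subsetP => e eB.
  rewrite inE; apply/andP; split; last by apply/asboolP/j_max.
  by move: eB; rewrite inE => /andP[].
- rewrite (_ : [set e in E | asbool (Rlt (f m) (f e))] = E :\: below m).
    rewrite cardsD (setIidPr _); first lia.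
    by rewrite /below setIdE subsetIl.
  apply/setP => e; rewrite !inE; case: (e \in E) => //=; rewrite andbT.
  by do 2 case: asboolP => ? /=; lra.
Qed.

Section IntervalCover.
Variables (T : finType) (lo hi : T -> R).

Definition meets (t u : T) : Prop := Rle (lo t) (hi u) /\ Rle (lo u) (hi t).
Definition on_interval (t : T) (y : R) : Prop := Rle (lo t) y /\ Rle y (hi t).
Definition covers (V S : {set T}) : Prop :=
  forall v, v \in V -> forall y, on_interval v y -> exists2 h, h \in S & on_interval h y.

Lemma on_interval_meets t u y : on_interval t y -> on_interval u y -> meets t u.
Proof. by rewrite /on_interval /meets; lra. Qed.

Lemma meets_on_interval t u : Rle (lo t) (hi t) -> Rle (lo u) (hi u) ->
  meets t u -> exists y, on_interval t y /\ on_interval u y.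
Proof.
rewrite /meets /on_interval => ? ? ?.
by case: (Rle_lt_dec (lo t) (lo u)) => ?; [exists (lo u) | exists (lo t)]; lra.
Qed.

Lemma covers_exchange (V S : {set T}) v a d :
  let M := [set h in S | asbool (meets v h)] in
  covers V S -> v \in V -> a \in M -> d \in M ->
  (forall h, h \in M -> Rle (lo a) (lo h)) -> (forall h, h \in M -> Rle (hi h) (hi d)) ->
  covers V ((S :\: M) :|: [set a; d; v]).
Proof.
move=> M coverS vV aM dM a_min d_max u uV y yu.
have [h hS yh] := coverS u uV y yu.
have [hM | hM] := boolP (h \in M); last by exists h; rewrite // in_setU in_setD hM hS.
have := a_min h hM; have := d_max h hM.
move: hM aM dM; rewrite !inE => /andP[_ /asboolP vh] /andP[_ /asboolP va] /andP[_ /asboolP vd].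
move: vh va vd yh; rewrite /meets /on_interval => vh va vd yh hd ah.
case: (Rlt_le_dec y (lo v)) => [y_lo | lo_y].
  by exists a; rewrite /on_interval ?inE ?eqxx /= ?orbT //; lra.
case: (Rlt_le_dec (hi v) y) => [hi_y | y_hi].
  by exists d; rewrite /on_interval ?inE ?eqxx /= ?orbT //; lra.
by exists v; rewrite /on_interval ?inE ?eqxx /= ?orbT.
Qed.

(* A cover of minimum size is sparse: the exchange above would shrink it. *)
Lemma ex_sparse_cover (V : {set T}) : exists2 S : {set T}, S \subset V &
  covers V S /\ forall v, v \in V -> #|[set h in S | asbool (meets v h)]| <= 3.
Proof.
have [S [SV coverS] S_min] : exists2 S : {set T}, S \subset V /\ covers V S &
    forall S' : {set T}, S' \subset V -> covers V S' -> #|S| <= #|S'|.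
  pose cover_of := [pred S : {set T} | asbool (S \subset V /\ covers V S)].
  have coverV : V \in cover_of.
    by rewrite inE; apply/asboolP; split=> [|v vV y yv]; [exact: subxx | exists v].
  case: (arg_minnP (fun S : {set T} => #|S|) coverV) => S /asboolP coverS S_min.
  by exists S => // S' S'V coverS'; apply/S_min/asboolP.
exists S => //; split => // v vV; rewrite leqNgt; apply/negP => big_M.
set M := [set h in S | _] in big_M.
have [h0 h0M] : exists h, h \in M by apply/set0Pn; rewrite -card_gt0; lia.
have [a aM a_min] := ex_Rargmin lo h0M.
have [d dM d_max] := ex_Rargmax hi h0M.
have MS : M \subset S by rewrite /M setIdE subsetIl.
have exchangeV : (S :\: M) :|: [set a; d; v] \subset V.
  rewrite subUset (subset_trans (subsetDl S M) SV) /=.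
  apply/subsetP => x; rewrite !inE => /orP[/orP[]|] /eqP->;
    by rewrite // (subsetP SV) ?(subsetP MS).
have := S_min _ exchangeV (covers_exchange coverS vV aM dM a_min d_max).
have : #|(S :\: M) :|: [set a; d; v]| <= #|S :\: M| + #|[set a; d; v]| := leq_card_setU _ _.
have : #|[set a; d; v]| <= 3.
  by rewrite (leq_trans (leq_card_setU _ _)) // cards2 cards1; case: (_ != _).
by have := subset_leq_card MS; rewrite (cardsD S M) (setIidPr MS); lia.
Qed.

End IntervalCover.

Section Hops.
Variables (n : nat) (E : 'I_n -> 'I_n -> Prop).

Definition uedge (i j : 'I_n) : 'I_n * 'I_n := if i < j then (i, j) else (j, i).

Definition hop (H : {set 'I_n * 'I_n}) (u v : 'I_n) : Prop :=
  u = v \/ uedge u v \in H /\ E u v.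

Definition reach3 (H : {set 'I_n * 'I_n}) (u v : 'I_n) : Prop :=
  exists a b, [/\ hop H u a, hop H a b & hop H b v].

Lemma uedgeC i j : uedge i j = uedge j i.
Proof. by rewrite /uedge; case: (ltngtP i j) => // /val_inj ->. Qed.

Lemma hop_subset (H H' : {set 'I_n * 'I_n}) u v : H \subset H' -> hop H u v -> hop H' u v.
Proof. by move=> /subsetP HH' [-> | [/HH' ? ?]]; [left | right]. Qed.

Lemma reach3_subset (H H' : {set 'I_n * 'I_n}) u v :
  H \subset H' -> reach3 H u v -> reach3 H' u v.
Proof.
by move=> HH' [a [b [ua ab bv]]]; exists a, b; split; apply: hop_subset HH' _.
Qed.

Definition trim (G : 'I_n -> 'I_n -> Prop) (H : {set 'I_n * 'I_n}) : {set 'I_n * 'I_n} :=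
  [set e in H | (e.1 < e.2) && asbool (G e.1 e.2)].

Lemma hop_spanner_trim (G : 'I_n -> 'I_n -> Prop) (H : {set 'I_n * 'I_n}) :
  (forall u v, G u v -> G v u) -> (forall u v, u <> v -> E u v -> G u v) ->
  (forall u v, G u v -> reach3 H u v) -> hop_spanner G (trim G H) 3.
Proof.
move=> G_sym EG reachH; split=> [i j | u v /reachH [a [b [ua ab bv]]]].
  by rewrite inE => /andP[_ /andP[ij /asboolP]].
have hop_hadj x y : hop H x y -> x = y \/ hadj (trim G H) x y.
  have [-> _ | neq_xy] := eqVneq x y; first by left.
  case=> [eq_xy | [xyH Exy]]; first by rewrite eq_xy eqxx in neq_xy.
  have Gxy : G x y by apply: EG Exy => eq_xy; rewrite eq_xy eqxx in neq_xy.
  right.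
  rewrite /hadj !inE /=; move: xyH; rewrite /uedge.
  case: (ltngtP x y) => [xy | yx | /val_inj eq_xy] xyH.
  - by rewrite xyH; apply/orP; left; apply/asboolP.
  - by rewrite xyH; apply/orP; right; apply/asboolP/G_sym.
  - by rewrite eq_xy eqxx in neq_xy.
have step k x y z : x = y \/ hadj (trim G H) x y ->
    (exists p, size p <= k /\ path (hadj (trim G H)) y p /\ last y p = z) ->
    exists p, size p <= k.+1 /\ path (hadj (trim G H)) x p /\ last x p = z.
  case=> [-> | xy] [p [sp [pp lp]]]; first by exists p; split=> //; apply: leqW.
  by exists (y :: p); rewrite /= xy.
apply: (step 2 _ _ _ (hop_hadj _ _ ua)); apply: (step 1 _ _ _ (hop_hadj _ _ ab)).
by apply: (step 0 _ _ _ (hop_hadj _ _ bv)); exists [::].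
Qed.

Lemma hop_spanner_card0 (G : 'I_n -> 'I_n -> Prop) (H : {set 'I_n * 'I_n}) t :
  n <= 1 -> hop_spanner G H t -> #|H| = 0.
Proof.
move=> n_le1 [H_edges _]; apply/eqP; rewrite cards_eq0; apply/eqP/setP => -[i j].
by rewrite in_set0; apply/negP => /H_edges[ij _]; have := ltn_ord j; lia.
Qed.

Hypothesis E_sym : forall u v, E u v -> E v u.

Lemma reach3_sym (H : {set 'I_n * 'I_n}) u v : reach3 H u v -> reach3 H v u.
Proof.
have hop_sym x y : hop H x y -> hop H y x.
  by case=> [-> | [xy /E_sym yx]]; [left | right; rewrite uedgeC].
by case=> a [b [ua ab bv]]; exists b, a; split; apply: hop_sym.
Qed.

End Hops.

Section Star.
Variables (n : nat) (E : 'I_n -> 'I_n -> Prop) (lo hi : 'I_n -> R).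
Hypothesis E_sym : forall u v, E u v -> E v u.
Hypothesis lo_le_hi : forall i, Rle (lo i) (hi i).

(* Each [v] is joined to the members [h] of a sparse cover that it meets
   through a relay [x] of [L] meeting both, and each member of [L] is joined
   directly to the cover members it meets; a pair [l], [v] meeting at [y] is
   then linked by [l - h - x - v], where [h] covers [y]. *)
Lemma star_spanner (V L : {set 'I_n}) : L \subset V ->
  (forall l v, l \in L -> v \in V -> meets lo hi l v -> E l v) ->
  exists2 H : {set 'I_n * 'I_n}, #|H| <= 6 * #|V| &
    forall l v, l \in L -> v \in V -> meets lo hi l v -> reach3 E H l v.
Proof.
move=> LV meetsE.
have [S SV [coverS sparseS]] := ex_sparse_cover lo hi V.
pose M v := [set h in S | asbool (meets lo hi v h)].
pose relay v h := odflt v [pick x in L | asbool (meets lo hi x v /\ meets lo hi x h)].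
pose H := \bigcup_(l in L) [set uedge l h | h in M l] :|:
          \bigcup_(v in V) [set uedge v (relay v h) | h in M v].
exists H.
  have cardM (f : 'I_n -> 'I_n * 'I_n) v : v \in V -> #|f @: M v| <= 3.
    by move=> vV; rewrite (leq_trans (leq_imset_card _ _)) ?sparseS.
  rewrite (leq_trans (leq_card_setU _ _)) // (mulnDl 3 3) leq_add //.
    rewrite (leq_trans (card_bigcup_le (k := 3) _)) ?leq_mul2l ?subset_leq_card //.
    by move=> l /(subsetP LV); apply: cardM.
  by rewrite card_bigcup_le // => v; apply: cardM.
move=> l v lL vV lv.
have [y [yl yv]] := meets_on_interval (lo_le_hi l) (lo_le_hi v) lv.
have [h hS yh] := coverS v vV y yv.
have hM u : meets lo hi u h -> h \in M u by rewrite inE hS => /asboolP.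
have [x [xL xv xh] relay_vh] : exists2 x, [/\ x \in L, meets lo hi x v & meets lo hi x h] &
    relay v h = x.
  rewrite /relay; case: pickP => [x /andP[xL /asboolP[xv xh]] | none]; first by exists x.
  have /negP[] := none l; rewrite lL; apply/asboolP; split=> //.
  exact: on_interval_meets yl yh.
have lh : meets lo hi l h by apply: on_interval_meets yl yh.
exists h, x; split; right; split.
- by apply/setUP; left; apply/bigcupP; exists l => //; apply/imsetP; exists h; rewrite ?hM.
- exact: meetsE _ _ lL (subsetP SV h hS) lh.
- rewrite uedgeC; apply/setUP; left; apply/bigcupP; exists x => //.
  by apply/imsetP; exists h; rewrite ?hM.
- exact: E_sym (meetsE _ _ xL (subsetP SV h hS) xh).
- rewrite uedgeC -relay_vh; apply/setUP; right; apply/bigcupP; exists v => //.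
  by apply/imsetP; exists h; rewrite ?hM //; apply: on_interval_meets yv yh.
- exact: meetsE _ _ xL vV xv.
Qed.

End Star.

Definition overlap (r s : rect) : Prop :=
  Rle (xlo r) (xhi s) /\ Rle (xlo s) (xhi r) /\ Rle (ylo r) (yhi s) /\ Rle (ylo s) (yhi r).

Lemma overlap_sym r s : overlap r s -> overlap s r.
Proof. by rewrite /overlap; tauto. Qed.

Lemma rects_intersect_sym r s : rects_intersect r s -> rects_intersect s r.
Proof. by case=> p [rp sp]; exists p. Qed.

Lemma rects_intersect_overlap r s : rects_intersect r s -> overlap r s.
Proof. by case=> -[x y] []; rewrite /in_rect /overlap /=; lra. Qed.

Lemma overlap_rects_intersect r s :
  Rle (xlo r) (xhi r) -> Rle (ylo r) (yhi r) -> Rle (xlo s) (xhi s) -> Rle (ylo s) (yhi s) ->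
  overlap r s -> rects_intersect r s.
Proof.
rewrite /overlap => *; exists (Rmax (xlo r) (xlo s), Rmax (ylo r) (ylo s)).
by rewrite /in_rect /Rmax /=; case: Rle_dec => ?; case: Rle_dec => ?; lra.
Qed.

Definition slab_cost (N K : nat) : nat := 12 * (N + 2 * K * (trunc_log 2 K).+1).

Lemma slab_cost_split N C N1 N2 K k1 k2 :
  C <= N -> N1 <= K -> N2 <= K -> 2 * k1 <= K -> 2 * k2 <= K ->
  6 * N + 6 * C + slab_cost N1 k1 + slab_cost N2 k2 <= slab_cost N K.
Proof.
have log_half k : 2 * k <= K -> k * (trunc_log 2 k).+1 <= k * trunc_log 2 K.
  case: k => [|k] // k_le; rewrite leq_mul2l /= -trunc_log2_double //.
  by apply: leq_trunc_log; rewrite -mul2n.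
move=> CN N1K N2K k1K k2K; have := log_half _ k1K; have := log_half _ k2K.
have : (k1 + k2) * trunc_log 2 K <= K * trunc_log 2 K by rewrite leq_mul2r; lia.
rewrite /slab_cost; nia.
Qed.

Section Slabs.
Variables (n : nat) (rs : 'I_n -> rect).
Local Open Scope R_scope.

Local Notation reach := (reach3 (fun u v => overlap (rs u) (rs v))).
Let overlaps_sym u v : overlap (rs u) (rs v) -> overlap (rs v) (rs u) := @overlap_sym _ _.
Local Notation ymeets := (meets (fun i => ylo (rs i)) (fun i => yhi (rs i))).

Definition endpoint (e : 'I_n * bool) : R := if e.2 then xhi (rs e.1) else xlo (rs e.1).

Definition inner_endpoints (A : {set 'I_n}) (a b : R) : {set 'I_n * bool} :=
  [set e | (e.1 \in A) && asbool (a < endpoint e < b)].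

Definition in_slab (A : {set 'I_n}) (a b : R) : Prop :=
  forall r, r \in A -> xlo (rs r) < b /\ a < xhi (rs r).

Definition spans (a b : R) (r : 'I_n) : Prop := xlo (rs r) <= a /\ b <= xhi (rs r).

Definition stabbed (m : R) (r : 'I_n) : Prop := xlo (rs r) <= m <= xhi (rs r).

Definition nonspanning (A : {set 'I_n}) (a b : R) : {set 'I_n} :=
  [set r in A | ~~ asbool (spans a b r)].

Definition stabbed_part (A : {set 'I_n}) (m : R) : {set 'I_n} :=
  [set r in A | asbool (stabbed m r)].

Definition left_part (A : {set 'I_n}) (a b m : R) : {set 'I_n} :=
  [set r in nonspanning A a b | asbool (xlo (rs r) < m)].

Definition right_part (A : {set 'I_n}) (a b m : R) : {set 'I_n} :=
  [set r in nonspanning A a b | asbool (m < xhi (rs r))].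

Lemma ex_slab_setT : exists a b, in_slab [set: 'I_n] a b.
Proof.
case: (pickP (@predT 'I_n)) => [i0 _ | no_rect]; last by exists 0, 0 => r; have := no_rect r.
have [l _ l_min] := @ex_Rargmin _ predT (fun i => xhi (rs i)) i0 isT.
have [u _ u_max] := @ex_Rargmax _ predT (fun i => xlo (rs i)) i0 isT.
exists (xhi (rs l) - 1), (xlo (rs u) + 1) => r _.
by have := l_min r isT; have := u_max r isT; lra.
Qed.

Lemma overlap_ymeets u v : overlap (rs u) (rs v) -> ymeets u v.
Proof. by case=> _ [_ []]. Qed.

(* A rectangle of the slab that does not span it has an endpoint inside. *)
Lemma card_nonspanning A a b :
  in_slab A a b -> (#|nonspanning A a b| <= #|inner_endpoints A a b|)%N.
Proof.
move=> slabA; pose inner_end r := (r, asbool (xlo (rs r) <= a)).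
have inner_end_inj : injective inner_end by move=> r1 r2 /(congr1 fst).
rewrite -(card_imset _ inner_end_inj).
apply/subset_leq_card/subsetP => _ /imsetP[r + ->].
rewrite !inE => /andP[rA /asboolP r_short].
have [xlo_b a_xhi] := slabA r rA; rewrite rA /=; apply/asboolP; rewrite /endpoint /=.
case: asboolP => [xlo_a | a_xlo]; split=> //; try lra.
by case: (Rlt_le_dec (xhi (rs r)) b) => // b_xhi; case: r_short.
Qed.

Lemma median_split A a b : in_slab A a b -> (0 < #|inner_endpoints A a b|)%N ->
  exists m, [/\ in_slab (left_part A a b m) a m, in_slab (right_part A a b m) m b,
    (2 * #|inner_endpoints (left_part A a b m) a m| <= #|inner_endpoints A a b|)%N &
    (2 * #|inner_endpoints (right_part A a b m) m b| <= #|inner_endpoints A a b|)%N].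
Proof.
move=> slabA; rewrite card_gt0 => /(ex_median endpoint)[e0 e0_inner [lower upper]].
move: (e0_inner); rewrite inE => /andP[_ /asboolP[a_m m_b]].
exists (endpoint e0); split.
- by move=> r; rewrite !inE => /andP[/andP[/slabA[_ ?] _] /asboolP].
- by move=> r; rewrite !inE => /andP[/andP[/slabA[? _] _] /asboolP].
- apply: leq_trans lower; rewrite leq_mul2l subset_leq_card //.
  apply/subsetP => e; rewrite !inE => /andP[/andP[/andP[-> _] _] /asboolP[? ?]] /=.
  by apply/andP; split; apply/asboolP; lra.
- apply: leq_trans upper; rewrite leq_mul2l subset_leq_card //.
  apply/subsetP => e; rewrite !inE => /andP[/andP[/andP[-> _] _] /asboolP[? ?]] /=.
  by apply/andP; split; apply/asboolP; lra.
Qed.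

Hypothesis xlo_le_xhi : forall i, xlo (rs i) <= xhi (rs i).
Hypothesis ylo_le_yhi : forall i, ylo (rs i) <= yhi (rs i).

Lemma spanning_star A a b : in_slab A a b ->
  exists2 H : {set 'I_n * 'I_n}, (#|H| <= 6 * #|A|)%N &
    forall r s, r \in A -> s \in A -> spans a b r -> overlap (rs r) (rs s) -> reach H r s.
Proof.
move=> slabA; set L := [set r in A | asbool (spans a b r)].
have LA : L \subset A by rewrite /L setIdE subsetIl.
have spans_overlap l v : l \in L -> v \in A -> ymeets l v -> overlap (rs l) (rs v).
  rewrite inE => /andP[_ /asboolP[l_a b_l]] /slabA[v_b a_v] [? ?].
  by rewrite /overlap; lra.
have [H cardH reachH] := star_spanner overlaps_sym ylo_le_yhi LA spans_overlap.
exists H => // r s rA sA r_spans rs_ov.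
by apply: reachH => //; [rewrite inE rA; apply/asboolP | apply: overlap_ymeets].
Qed.

Lemma stabbed_star A m :
  exists2 H : {set 'I_n * 'I_n}, (#|H| <= 6 * #|stabbed_part A m|)%N &
    forall r s, r \in stabbed_part A m -> s \in stabbed_part A m ->
    overlap (rs r) (rs s) -> reach H r s.
Proof.
pose C := stabbed_part A m.
have stabbed_overlap l v : l \in C -> v \in C -> ymeets l v -> overlap (rs l) (rs v).
  by rewrite !inE => /andP[_ /asboolP[? ?]] /andP[_ /asboolP[? ?]] [? ?]; rewrite /overlap; lra.
have [H cardH reachH] := star_spanner overlaps_sym ylo_le_yhi (subxx C) stabbed_overlap.
by exists H => // r s rC sC /overlap_ymeets; apply: reachH.
Qed.

(* Two overlapping rectangles that neither span the slab nor both meet the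
   line [x = m] lie together on one side of it. *)
Lemma reach_by_parts (A : {set 'I_n}) a b m (Hl Hc H1 H2 : {set 'I_n * 'I_n}) :
  (forall r s, r \in A -> s \in A -> spans a b r -> overlap (rs r) (rs s) -> reach Hl r s) ->
  (forall r s, r \in stabbed_part A m -> s \in stabbed_part A m ->
     overlap (rs r) (rs s) -> reach Hc r s) ->
  (forall r s, r \in left_part A a b m -> s \in left_part A a b m ->
     overlap (rs r) (rs s) -> reach H1 r s) ->
  (forall r s, r \in right_part A a b m -> s \in right_part A a b m ->
     overlap (rs r) (rs s) -> reach H2 r s) ->
  forall r s, r \in A -> s \in A -> overlap (rs r) (rs s) ->
    reach (Hl :|: Hc :|: H1 :|: H2) r s.
Proof.
move=> reachl reachc reach1 reach2; set H := Hl :|: Hc :|: H1 :|: H2.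
have [sl sc s1 s2] : [/\ Hl \subset H, Hc \subset H, H1 \subset H & H2 \subset H].
  by split; apply/subsetP => e eX; rewrite !inE eX ?orbT.
have one_side r s : r \in A -> s \in A -> ~ spans a b r -> ~ spans a b s -> ~ stabbed m r ->
    overlap (rs r) (rs s) -> reach H r s.
  move=> rA sA r_short s_short r_unstabbed rs_ov.
  have rN : r \in nonspanning A a b by rewrite inE rA; apply/asboolP.
  have sN : s \in nonspanning A a b by rewrite inE sA; apply/asboolP.
  have := xlo_le_xhi r; have := xlo_le_xhi s; move: rs_ov (rs_ov) => [? [? _]] rs_ov ? ?.
  case: (Rlt_le_dec (xhi (rs r)) m) => [r_left | m_xhi].
    apply: reach3_subset s1 (reach1 _ _ _ _ rs_ov).
      by rewrite inE rN /=; apply/asboolP; lra.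
    by rewrite inE sN /=; apply/asboolP; lra.
  have m_xlo : m < xlo (rs r).
    by case: (Rlt_le_dec m (xlo (rs r))) => // ?; case: r_unstabbed.
  apply: reach3_subset s2 (reach2 _ _ _ _ rs_ov).
    by rewrite inE rN /=; apply/asboolP; lra.
  by rewrite inE sN /=; apply/asboolP; lra.
move=> r s rA sA rs_ov.
have [r_spans | r_short] := asboolP (spans a b r).
  exact: reach3_subset sl (reachl _ _ rA sA r_spans rs_ov).
have [s_spans | s_short] := asboolP (spans a b s).
  exact/(reach3_sym overlaps_sym)/(reach3_subset sl)/reachl/overlap_sym.
have [r_stabbed | r_unstabbed] := asboolP (stabbed m r); last exact: one_side.
have [s_stabbed | s_unstabbed] := asboolP (stabbed m s).
  by apply: reach3_subset sc (reachc _ _ _ _ rs_ov); rewrite inE ?rA ?sA; apply/asboolP.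
exact/(reach3_sym overlaps_sym)/one_side/overlap_sym.
Qed.

Lemma slab_spanner K A a b : #|inner_endpoints A a b| = K -> in_slab A a b ->
  exists2 H : {set 'I_n * 'I_n}, (#|H| <= slab_cost #|A| K)%N &
    forall r s, r \in A -> s \in A -> overlap (rs r) (rs s) -> reach H r s.
Proof.
elim/ltn_ind: K A a b => K IH A a b AK slabA.
have [Hl cardHl reachl] := spanning_star slabA.
have N_K := card_nonspanning slabA; rewrite AK in N_K.
have [K0 | K_gt0] := posnP K.
  exists Hl => [|r s rA sA rs_ov]; first by rewrite /slab_cost; lia.
  apply: reachl => //; move: N_K; rewrite K0 leqn0 cards_eq0 => /eqP N0.
  have : r \notin nonspanning A a b by rewrite N0 inE.
  by rewrite inE rA negbK => /asboolP.
have /(median_split slabA)[m [slab1 slab2]] : (0 < #|inner_endpoints A a b|)%N by rewrite AK.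
rewrite AK => half1 half2.
have half_lt k : (2 * k <= K)%N -> (k < K)%N by lia.
have [Hc cardHc reachc] := stabbed_star A m.
have [H1 cardH1 reach1] := IH _ (half_lt _ half1) _ _ _ erefl slab1.
have [H2 cardH2 reach2] := IH _ (half_lt _ half2) _ _ _ erefl slab2.
exists (Hl :|: Hc :|: H1 :|: H2); last exact: reach_by_parts reachl reachc reach1 reach2.
have card_union : (#|Hl :|: Hc :|: H1 :|: H2| <= #|Hl| + #|Hc| + #|H1| + #|H2|)%N.
  by do 3 rewrite (leq_trans (leq_card_setU _ _)) ?leq_add2r //.
have CA : (#|stabbed_part A m| <= #|A|)%N.
  by rewrite subset_leq_card // /stabbed_part setIdE subsetIl.
have part_le (X : {set 'I_n}) : X \subset nonspanning A a b -> (#|X| <= K)%N.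
  by move=> XN; apply: leq_trans (subset_leq_card XN) N_K.
have N1K : (#|left_part A a b m| <= K)%N by rewrite part_le // /left_part setIdE subsetIl.
have N2K : (#|right_part A a b m| <= K)%N by rewrite part_le // /right_part setIdE subsetIl.
by have := slab_cost_split CA N1K N2K half1 half2; lia.
Qed.

End Slabs.

Section CostBound.
Local Open Scope R_scope.

Lemma INR_expn b t : INR (b ^ t) = INR b ^ t.
Proof. by elim: t => [|t IH] //=; rewrite expnS mult_INR IH. Qed.

Lemma trunc_log2_ln m : (0 < m)%N -> INR (trunc_log 2 m) * ln 2 <= ln (INR m).
Proof.
move=> m_gt0; rewrite -ln_pow; last lra.
have : INR (2 ^ trunc_log 2 m) <= INR m by apply: le_INR; apply/leP; apply: trunc_logP.
rewrite INR_expn (INR_IZR_INZ 2) /= => /Rle_lt_or_eq_dec[lt_m | ->]; last exact: Rle_refl.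
by apply/Rlt_le/ln_increasing => //; apply: pow_lt; lra.
Qed.

Lemma slab_cost_le_nlogn N K : (2 <= N)%N -> (K <= 2 * N)%N ->
  INR (slab_cost N K) <= 312 * INR N * ln (INR N).
Proof.
move=> N_ge2 K_le; set t := trunc_log 2 N.
have t_ge1 : 1 <= INR t by apply: (le_INR 1); apply/leP; rewrite trunc_log_gt0.
have t_ln : INR t * ln 2 <= ln (INR N) by apply: trunc_log2_ln; lia.
have cost_le : INR (slab_cost N K) <= INR N * (48 * INR t + 108).
  have cost_nat : (slab_cost N K <= N * (48 * t + 108))%N.
    have : (trunc_log 2 K <= t.+1)%N.
      by rewrite -trunc_log2_double ?(leq_trans _ N_ge2) // leq_trunc_log // -mul2n.
    by rewrite /slab_cost; nia.
  apply: Rle_trans (le_INR _ _ (leP cost_nat)) (Req_le _ _ _).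
  by rewrite mult_INR plus_INR mult_INR !INR_IZR_INZ.
have t_le : INR t <= 2 * ln (INR N) by have := ln_lt_2; nra.
have : 48 * INR t + 108 <= 312 * ln (INR N) by lra.
have : 0 <= INR N by apply: pos_INR.
nra.
Qed.

End CostBound.

Lemma ig_hop_spanner n (rs : 'I_n -> rect) :
  (forall i, Rle (xlo (rs i)) (xhi (rs i))) -> (forall i, Rle (ylo (rs i)) (yhi (rs i))) ->
  exists2 H, hop_spanner (ig_edge rs) H 3 & exists2 K, K <= 2 * n & #|H| <= slab_cost n K.
Proof.
move=> xlo_le_xhi ylo_le_yhi; have [a [b slab]] := ex_slab_setT rs.
have [H cardH reachH] := slab_spanner xlo_le_xhi ylo_le_yhi (erefl _) slab.
exists (trim (ig_edge rs) H).
  apply: (hop_spanner_trim (E := fun u v => overlap (rs u) (rs v))).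
  - by move=> u v [uv /rects_intersect_sym vu]; split=> // /esym.
  - by move=> u v uv uv_ov; split=> //; apply: overlap_rects_intersect.
  - by move=> u v [_ /rects_intersect_overlap uv_ov]; apply: reachH; rewrite ?inE.
exists #|inner_endpoints rs [set: 'I_n] a b|.
  by rewrite (leq_trans (max_card _)) // card_prod card_ord card_bool mulnC.
rewrite cardsT card_ord in cardH; apply: leq_trans cardH.
by rewrite /trim setIdE subset_leq_card ?subsetIl.
Qed.

Theorem theorem20 :
  exists C : R, Rlt 0 C /\
    forall (n : nat) (rs : 'I_n -> rect),
      (forall i, is_rect (rs i)) ->
      exists H : {set 'I_n * 'I_n},
        hop_spanner (ig_edge rs) H 3 /\
        Rle (INR #|H|) (Rmult (Rmult C (INR n)) (ln (INR n))).
Proof.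
exists (IZR 312); split; first lra.
move=> n rs rect_rs.
have [H spannerH [K K_le cardH]] := ig_hop_spanner
  (fun i => Rlt_le _ _ (proj1 (rect_rs i))) (fun i => Rlt_le _ _ (proj2 (rect_rs i))).
exists H; split=> //.
have [n_le1 | n_ge2] := leqP n 1.
  rewrite (hop_spanner_card0 n_le1 spannerH).
  have [-> | ->] : n = 0 \/ n = 1 by lia.
    by rewrite /=; lra.
  by rewrite /= ln_1; lra.
apply: Rle_trans (slab_cost_le_nlogn n_ge2 K_le).
by apply: le_INR; apply/leP.
Qed.
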